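(* Let $(z_n)_{n\ge1}$ be real numbers in $(0,1)$ with $\sum_{n}(1-z_n)<\infty$ and $z_n\to1$, and let $B(z)=\prod_{n=1}^\infty\frac{z_n-z}{1-z_nz}=\sum_{n\ge0}a_nz^n$. With $A_n=a_0+\dots+a_n$ and $M_n=\frac{A_0+\dots+A_{n-1}}n$: if $(M_n)$ converges to some limit $c$, then $c=0$. *)

From Stdlib Require Export Reals.
Open Scope R_scope.

(* Partial Blaschke product  prod_{k=0}^{N} (z_k - x)/(1 - z_k x)
   (the paper's z_1, z_2, ... are z 0, z 1, ... here). *)
Definition blaschke_partial (z : nat -> R) (x : R) (N : nat) : R :=
  prod_f_R0 (fun k => (z k - x) / (1 - z k * x)) N.

Definition Apart (a : nat -> R) (n : nat) : R := sum_f_R0 a n.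

(* M_n = (A_0 + ... + A_{n-1}) / n, for n >= 1 *)
Definition Mmean (a : nat -> R) (n : nat) : R :=
  sum_f_R0 (Apart a) (pred n) / INR n.

From Stdlib Require Import Reals Lra Lia.
Open Scope R_scope.

(* The theorem is an Abelian argument.  The Blaschke product B vanishes at
   every z_m, and z_m -> 1.  On the other hand B(x) = sum a_n x^n, and a
   Cesaro-summable series is Abel-summable to the same value: if the means
   M_n of the partial sums A_n tend to c, then sum a_n x^n -> c as x -> 1^-.
   Evaluating at x = z_m close to 1 thus gives |c| < eps for every eps > 0.

   The Abelian theorem is proved with finite sums only.  Two summations by
   parts write sum_(n<=N) a_n x^n as (1-x)^2 sum_(n<=N) S_n x^n plus a
   boundary term, where S_n = A_0 + ... + A_n = (n+1) M_(n+1).  Writing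
   S_n = (n+1)(c + e_n) with e_n -> 0, and using (1-x)^2 sum (n+1) x^n <= 1,
   the main term is within eps of c up to finitely many early terms carrying
   the factor (1-x)^2; the boundary term is O(N x^N) and vanishes as N grows. *)

Lemma sum_f_R0_mono (f : nat -> R) :
  (forall n, 0 <= f n) -> forall m n, (m <= n)%nat -> sum_f_R0 f m <= sum_f_R0 f n.
Proof.
  intros Hf m n Hmn. induction Hmn as [|n _ IH]; [lra|].
  cbn [sum_f_R0]. specialize (Hf (S n)). lra.
Qed.

Lemma sum_truncated_le (f : nat -> R) (m N : nat) :
  (forall n, 0 <= f n) ->
  sum_f_R0 (fun n => if (n <=? m)%nat then f n else 0) N <= sum_f_R0 f m.
Proof.
  intros Hf. induction N as [|N IH].
  - cbn. apply (sum_f_R0_mono f Hf 0 m). lia.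
  - destruct (S N <=? m)%nat eqn:HN.
    + apply Nat.leb_le in HN.
      rewrite (sum_eq _ f) by (intros i Hi; replace (i <=? m)%nat with true;
        [reflexivity | symmetry; apply Nat.leb_le; lia]).
      apply sum_f_R0_mono; auto.
    + cbn [sum_f_R0]. rewrite HN. lra.
Qed.

(* Bernoulli's inequality makes n y^n bounded when 0 < y < 1. *)
Lemma linear_geometric_bounded (y : R) :
  0 < y < 1 -> exists C, forall n, INR n * y ^ n <= C.
Proof.
  intros Hy. set (h := / y - 1).
  assert (Hh : 0 < h).
  { unfold h. assert (1 < / y) by (rewrite <- Rinv_1; apply Rinv_lt_contravar; lra). lra. }
  exists (/ h). intro n.
  pose proof (poly n h Hh) as Hbern.
  replace (1 + h) with (/ y) in Hbern by (unfold h; ring).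
  rewrite pow_inv in Hbern.
  pose proof (pow_lt y n ltac:(lra)) as Hyn.
  apply Rmult_le_reg_l with h; [lra|]. rewrite Rinv_r by lra.
  apply Rmult_le_reg_r with (/ y ^ n); [apply Rinv_0_lt_compat; lra|].
  replace (h * (INR n * y ^ n) * / y ^ n) with (INR n * h) by (field; lra). lra.
Qed.

(* (n+1) x^n -> 0 for 0 < x < 1: write x^n = y^n y^n with y = sqrt x and use
   the boundedness of n y^n together with y^n -> 0. *)
Lemma linear_geometric_vanishes (x : R) :
  0 < x < 1 -> Un_cv (fun n => INR (S n) * x ^ n) 0.
Proof.
  intros Hx eps Heps.
  set (y := sqrt x).
  assert (Hy : 0 < y < 1).
  { split; [apply sqrt_lt_R0; lra|]. unfold y; rewrite <- sqrt_1; apply sqrt_lt_1_alt; lra. }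
  assert (Hyy : y * y = x) by (unfold y; apply sqrt_sqrt; lra).
  destruct (linear_geometric_bounded y Hy) as [C HC].
  assert (HC0 : 0 < Rabs C + 1) by (pose proof (Rabs_pos C); lra).
  destruct (pow_lt_1_zero y ltac:(rewrite Rabs_pos_eq; lra) (eps * y / (Rabs C + 1)))
    as [N HN]; [apply Rdiv_lt_0_compat; [apply Rmult_lt_0_compat|]; lra|].
  exists N. intros n Hn. unfold R_dist. rewrite Rminus_0_r.
  specialize (HN n Hn). rewrite Rabs_pos_eq in HN by (apply pow_le; lra).
  assert (Hsplit : INR (S n) * x ^ n = INR (S n) * y ^ S n * y ^ n / y).
  { rewrite <- Hyy, Rpow_mult_distr. cbn [pow]. field. lra. }
  pose proof (pow_lt y n ltac:(lra)).
  pose proof (HC (S n)). pose proof (Rle_abs C).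
  rewrite Hsplit, Rabs_pos_eq
    by (apply Rmult_le_pos; [apply Rmult_le_pos; [apply Rmult_le_pos|]|];
        try apply pos_INR; try apply pow_le; try (left; apply Rinv_0_lt_compat); lra).
  apply Rle_lt_trans with ((Rabs C + 1) * y ^ n / y).
  - unfold Rdiv. apply Rmult_le_compat_r; [left; apply Rinv_0_lt_compat; lra|].
    apply Rmult_le_compat_r; lra.
  - apply Rmult_lt_reg_r with (y / (Rabs C + 1)); [apply Rdiv_lt_0_compat; lra|].
    replace ((Rabs C + 1) * y ^ n / y * (y / (Rabs C + 1))) with (y ^ n) by (field; lra).
    replace (eps * (y / (Rabs C + 1))) with (eps * y / (Rabs C + 1)) by (field; lra). lra.
Qed.

(* Summation by parts, twice: a_n = S_n - 2 S_(n-1) + S_(n-2) for the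
   second partial sums S_n = A_0 + ... + A_n. *)
Lemma power_sum_by_parts (a : nat -> R) (x : R) (N : nat) :
  sum_f_R0 (fun n => a n * x ^ n) N =
  (1 - x) ^ 2 * sum_f_R0 (fun n => sum_f_R0 (Apart a) n * x ^ n) N
  + x ^ S N * ((1 - x) * sum_f_R0 (Apart a) N + Apart a N).
Proof.
  induction N as [|N IH].
  - unfold Apart. cbn. ring.
  - cbn [sum_f_R0]. rewrite IH.
    change (Apart a (S N)) with (Apart a N + a (S N)).
    cbn [sum_f_R0 pow]. ring.
Qed.

(* The same identity for a = (1, 0, 0, ...), i.e. S_n = n + 1. *)
Lemma weighted_geometric_sum (x : R) (N : nat) :
  (1 - x) ^ 2 * sum_f_R0 (fun n => INR (S n) * x ^ n) N =
  1 - INR (S (S N)) * x ^ S N + INR (S N) * x ^ S (S N).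
Proof.
  induction N as [|N IH].
  - cbn. ring.
  - cbn [sum_f_R0]. rewrite Rmult_plus_distr_l, IH, !S_INR. cbn [pow]. ring.
Qed.

Lemma weighted_geometric_sum_le_one (x : R) (N : nat) :
  0 <= x <= 1 -> (1 - x) ^ 2 * sum_f_R0 (fun n => INR (S n) * x ^ n) N <= 1.
Proof.
  intros Hx. rewrite weighted_geometric_sum.
  replace (x ^ S (S N)) with (x * x ^ S N) by reflexivity.
  pose proof (pow_le x (S N) ltac:(lra)). pose proof (pos_INR (S N)).
  rewrite (S_INR (S N)).
  assert (INR (S N) * x <= INR (S N)) by (rewrite <- (Rmult_1_r (INR (S N))) at 2;
    apply Rmult_le_compat_l; lra).
  nra.
Qed.

Lemma sum_Apart_mean (a : nat -> R) (n : nat) :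
  sum_f_R0 (Apart a) n = INR (S n) * Mmean a (S n).
Proof.
  unfold Mmean. cbn [pred]. field. apply not_0_INR. lia.
Qed.

Lemma Apart_bound (a : nat -> R) (l : R) :
  (forall n, Rabs (Mmean a (S n)) <= l) ->
  forall N, Rabs (Apart a N) <= 2 * INR (S N) * l.
Proof.
  intros Hl N.
  assert (HS : forall n, Rabs (sum_f_R0 (Apart a) n) <= INR (S n) * l).
  { intro n. rewrite sum_Apart_mean, Rabs_mult, Rabs_pos_eq by apply pos_INR.
    apply Rmult_le_compat_l; [apply pos_INR | apply Hl]. }
  assert (Hl0 : 0 <= l) by (pose proof (Hl 0%nat); pose proof (Rabs_pos (Mmean a 1)); lra).
  destruct N as [|k].
  - pose proof (HS 0%nat). cbn in *. nra.
  - replace (Apart a (S k)) with (sum_f_R0 (Apart a) (S k) - sum_f_R0 (Apart a) k)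
      by (cbn [sum_f_R0]; ring).
    pose proof (Rabs_triang (sum_f_R0 (Apart a) (S k)) (- sum_f_R0 (Apart a) k)).
    rewrite Rabs_Ropp in *. pose proof (HS (S k)). pose proof (HS k).
    pose proof (S_INR (S k)). pose proof (pos_INR (S k)). unfold Rminus. nra.
Qed.

(* Boundary term of the summation by parts, after subtracting the limit c. *)
Definition abel_remainder (a : nat -> R) (c x : R) (N : nat) : R :=
  (1 - x) * sum_f_R0 (Apart a) N + Apart a N - c * INR (S (S N)) + c * INR (S N) * x.

(* Writing S_n = (n+1) (c + e_n) with e_n = M_(n+1) - c, the constant part
   of the main term sums to c up to a boundary term. *)
Lemma abel_decomposition (a : nat -> R) (c x : R) (N : nat) :
  sum_f_R0 (fun n => a n * x ^ n) N - c =
  (1 - x) ^ 2 * sum_f_R0 (fun n => INR (S n) * (Mmean a (S n) - c) * x ^ n) N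
  + x ^ S N * abel_remainder a c x N.
Proof.
  rewrite power_sum_by_parts.
  rewrite (sum_eq _ (fun n => INR (S n) * x ^ n * c
                              + INR (S n) * (Mmean a (S n) - c) * x ^ n))
    by (intros n _; rewrite sum_Apart_mean; ring).
  rewrite plus_sum, <- scal_sum.
  replace ((1 - x) ^ 2 * (c * sum_f_R0 (fun n => INR (S n) * x ^ n) N
                          + sum_f_R0 (fun n => INR (S n) * (Mmean a (S n) - c) * x ^ n) N))
    with (c * ((1 - x) ^ 2 * sum_f_R0 (fun n => INR (S n) * x ^ n) N)
          + (1 - x) ^ 2 * sum_f_R0 (fun n => INR (S n) * (Mmean a (S n) - c) * x ^ n) N)
    by ring.
  rewrite weighted_geometric_sum. unfold abel_remainder. cbn [pow]. ring.
Qed.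

Lemma abel_remainder_bound (a : nat -> R) (c x l : R) (N : nat) :
  0 <= x <= 1 -> (forall n, Rabs (Mmean a (S n)) <= l) ->
  Rabs (abel_remainder a c x N) <= INR (S (S N)) * (3 * l + 2 * Rabs c).
Proof.
  intros Hx Hl. unfold abel_remainder.
  pose proof (Apart_bound a l Hl N) as HA.
  assert (HS : Rabs (sum_f_R0 (Apart a) N) <= INR (S N) * l).
  { rewrite sum_Apart_mean, Rabs_mult, Rabs_pos_eq by apply pos_INR.
    apply Rmult_le_compat_l; [apply pos_INR | apply Hl]. }
  assert (Hl0 : 0 <= l) by (pose proof (Hl 0%nat); pose proof (Rabs_pos (Mmean a 1)); lra).
  pose proof (Rabs_triang ((1 - x) * sum_f_R0 (Apart a) N + Apart a N - c * INR (S (S N)))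
                          (c * INR (S N) * x)).
  pose proof (Rabs_triang ((1 - x) * sum_f_R0 (Apart a) N + Apart a N)
                          (- (c * INR (S (S N))))).
  pose proof (Rabs_triang ((1 - x) * sum_f_R0 (Apart a) N) (Apart a N)).
  unfold Rminus in *. rewrite Rabs_Ropp in *.
  rewrite !Rabs_mult in *. rewrite (Rabs_pos_eq (1 + - x)), (Rabs_pos_eq x) in * by lra.
  rewrite !(Rabs_pos_eq (INR _)) in * by apply pos_INR.
  pose proof (Rabs_pos c). pose proof (Rabs_pos (sum_f_R0 (Apart a) N)).
  assert ((1 + - x) * Rabs (sum_f_R0 (Apart a) N) <= Rabs (sum_f_R0 (Apart a) N)) by nra.
  assert (Rabs c * INR (S N) * x <= Rabs c * INR (S N)).
  { pose proof (pos_INR (S N)). assert (0 <= Rabs c * INR (S N)) by nra. nra. }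
  assert (INR (S N) * l <= INR (S (S N)) * l) by (rewrite (S_INR (S N)); nra).
  assert (Rabs c * INR (S N) <= Rabs c * INR (S (S N))) by (rewrite (S_INR (S N)); nra).
  lra.
Qed.

Lemma weighted_error_bound (e : nat -> R) (eps x : R) (N0 N : nat) :
  0 <= x <= 1 -> (forall n, (N0 < n)%nat -> Rabs (e n) <= eps) ->
  (1 - x) ^ 2 * Rabs (sum_f_R0 (fun n => INR (S n) * e n * x ^ n) N)
  <= eps + (1 - x) ^ 2 * sum_f_R0 (fun n => INR (S n) * Rabs (e n)) N0.
Proof.
  intros Hx Hlate.
  assert (Heps : 0 <= eps) by (pose proof (Hlate (S N0) (Nat.lt_succ_diag_r N0));
                               pose proof (Rabs_pos (e (S N0))); lra).
  set (early := fun n => if (n <=? N0)%nat then INR (S n) * Rabs (e n) else 0).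
  assert (Hterm : forall n, Rabs (INR (S n) * e n * x ^ n)
                            <= INR (S n) * x ^ n * eps + early n).
  { intro n. pose proof (pos_INR (S n)) as HSn. pose proof (Rabs_pos (e n)).
    pose proof (pow_le x n ltac:(lra)).
    assert (x ^ n <= 1) by (rewrite <- (pow1 n); apply pow_incr; lra).
    rewrite !Rabs_mult, Rabs_pos_eq, (Rabs_pos_eq (x ^ n)) by lra.
    unfold early. destruct (n <=? N0)%nat eqn:Hn.
    - assert (0 <= INR (S n) * Rabs (e n)) by nra.
      assert (0 <= INR (S n) * x ^ n * eps) by (apply Rmult_le_pos; nra).
      assert (INR (S n) * Rabs (e n) * x ^ n <= INR (S n) * Rabs (e n)) by nra.
      lra.
    - apply Nat.leb_gt in Hn. pose proof (Hlate n Hn).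
      assert (0 <= INR (S n) * x ^ n) by nra.
      assert (INR (S n) * x ^ n * Rabs (e n) <= INR (S n) * x ^ n * eps)
        by (apply Rmult_le_compat_l; lra).
      lra. }
  assert (Hearly : sum_f_R0 early N <= sum_f_R0 (fun n => INR (S n) * Rabs (e n)) N0)
    by (apply sum_truncated_le; intro n; pose proof (pos_INR (S n));
        pose proof (Rabs_pos (e n)); nra).
  assert (Hsum : Rabs (sum_f_R0 (fun n => INR (S n) * e n * x ^ n) N)
                 <= eps * sum_f_R0 (fun n => INR (S n) * x ^ n) N
                    + sum_f_R0 (fun n => INR (S n) * Rabs (e n)) N0).
  { eapply Rle_trans; [apply Rsum_abs|]. eapply Rle_trans; [apply sum_growing, Hterm|].
    rewrite plus_sum, <- scal_sum. lra. }
  pose proof (weighted_geometric_sum_le_one x N Hx).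
  assert (0 <= (1 - x) ^ 2) by (apply pow_le; lra).
  assert (0 <= sum_f_R0 (fun n => INR (S n) * x ^ n) N)
    by (apply cond_pos_sum; intro n; apply Rmult_le_pos; [apply pos_INR | apply pow_le; lra]).
  nra.
Qed.

Lemma abel_estimate (a : nat -> R) (c eps x l : R) (N0 N : nat) :
  0 <= x <= 1 -> (forall n, Rabs (Mmean a (S n)) <= l) ->
  (forall n, (N0 < n)%nat -> Rabs (Mmean a (S n) - c) <= eps) ->
  Rabs (sum_f_R0 (fun n => a n * x ^ n) N - c)
  <= eps + (1 - x) ^ 2 * sum_f_R0 (fun n => INR (S n) * Rabs (Mmean a (S n) - c)) N0
     + INR (S (S N)) * x ^ S N * (3 * l + 2 * Rabs c).
Proof.
  intros Hx Hl Hlate.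
  rewrite abel_decomposition.
  eapply Rle_trans; [apply Rabs_triang|].
  rewrite !Rabs_mult, (Rabs_pos_eq ((1 - x) ^ 2)), (Rabs_pos_eq (x ^ S N))
    by (apply pow_le; lra).
  pose proof (weighted_error_bound (fun n => Mmean a (S n) - c) eps x N0 N Hx Hlate).
  pose proof (abel_remainder_bound a c x l N Hx Hl).
  assert (x ^ S N * Rabs (abel_remainder a c x N)
          <= x ^ S N * (INR (S (S N)) * (3 * l + 2 * Rabs c)))
    by (apply Rmult_le_compat_l; [apply pow_le|]; lra).
  lra.
Qed.

Lemma div_succ_mul_le (t K : R) : 0 <= t -> 0 <= K -> t / (K + 1) * K <= t.
Proof.
  intros Ht HK. apply Rle_trans with (t / (K + 1) * (K + 1)).
  - apply Rmult_le_compat_l; [unfold Rdiv; apply Rmult_le_pos; [|left; apply Rinv_0_lt_compat] |]; lra.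
  - right. field. lra.
Qed.

Theorem cesaro_implies_abel (a : nat -> R) (c : R) :
  Un_cv (fun n => Mmean a (S n)) c ->
  forall eps, 0 < eps -> exists delta, 0 < delta /\
    forall x s, 0 < x < 1 -> 1 - x < delta ->
      Un_cv (fun N => sum_f_R0 (fun n => a n * x ^ n) N) s -> Rabs (s - c) < eps.
Proof.
  intros hM eps Heps.
  destruct (maj_by_pos _ (exist _ c hM)) as [l [Hl0 Hl]].
  destruct (hM (eps / 4) ltac:(lra)) as [N0 HN0].
  assert (Hlate : forall n, (N0 < n)%nat -> Rabs (Mmean a (S n) - c) <= eps / 4)
    by (intros n Hn; left; apply (HN0 n); lia).
  set (H := sum_f_R0 (fun n => INR (S n) * Rabs (Mmean a (S n) - c)) N0).
  assert (HH : 0 <= H) by (apply cond_pos_sum; intro n;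
                           apply Rmult_le_pos; [apply pos_INR | apply Rabs_pos]).
  set (K := 3 * l + 2 * Rabs c).
  assert (HK : 0 <= K) by (pose proof (Rabs_pos c); unfold K; lra).
  exists (eps / 4 / (H + 1)). split; [apply Rdiv_lt_0_compat; lra|].
  intros x s Hx Hclose Hs.
  (* x close to 1 kills the early terms *)
  assert (Hfront : (1 - x) ^ 2 * H <= eps / 4).
  { assert ((1 - x) * H <= eps / 4 / (H + 1) * H) by (apply Rmult_le_compat_r; lra).
    pose proof (div_succ_mul_le (eps / 4) H ltac:(lra) HH).
    assert (0 <= (1 - x) * H) by (apply Rmult_le_pos; lra).
    replace ((1 - x) ^ 2 * H) with ((1 - x) * ((1 - x) * H)) by ring. nra. }
  (* a large truncation index N kills the boundary term and approximates s *)
  destruct (linear_geometric_vanishes x Hx (eps / 4 / (K + 1))) as [N1 HN1];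
    [apply Rdiv_lt_0_compat; lra|].
  destruct (Hs (eps / 4) ltac:(lra)) as [N2 HN2].
  set (N := Nat.max N1 N2).
  specialize (HN1 (S N) ltac:(unfold N; lia)). specialize (HN2 N ltac:(unfold N; lia)).
  unfold R_dist in HN1, HN2. rewrite Rminus_0_r, Rabs_pos_eq in HN1
    by (apply Rmult_le_pos; [apply pos_INR | apply pow_le; lra]).
  assert (Hback : INR (S (S N)) * x ^ S N * K <= eps / 4).
  { apply Rle_trans with (eps / 4 / (K + 1) * K); [apply Rmult_le_compat_r; lra|].
    apply div_succ_mul_le; lra. }
  pose proof (abel_estimate a c (eps / 4) x l N0 N ltac:(lra) Hl Hlate) as Hest.
  fold H K in Hest.
  pose proof (Rabs_triang (s - sum_f_R0 (fun n => a n * x ^ n) N)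
                          (sum_f_R0 (fun n => a n * x ^ n) N - c)).
  rewrite Rabs_minus_sym in HN2.
  replace (s - sum_f_R0 (fun n => a n * x ^ n) N + (sum_f_R0 (fun n => a n * x ^ n) N - c))
    with (s - c) in * by ring.
  lra.
Qed.

Lemma blaschke_partial_root (z : nat -> R) (m N : nat) :
  (m <= N)%nat -> blaschke_partial z (z m) N = 0.
Proof.
  intros HmN. unfold blaschke_partial. induction HmN as [|N _ IH].
  - destruct m; cbn; unfold Rminus, Rdiv; rewrite Rplus_opp_r; ring.
  - cbn [prod_f_R0]. rewrite IH. ring.
Qed.

Lemma blaschke_root (z : nat -> R) (B : R -> R) (m : nat) :
  Un_cv (blaschke_partial z (z m)) (B (z m)) -> B (z m) = 0.
Proof.
  intros HB. apply (UL_sequence _ _ _ HB).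
  intros eps Heps. exists m. intros N HN. unfold R_dist.
  rewrite blaschke_partial_root by lia. rewrite Rminus_0_r, Rabs_R0. lra.
Qed.

Theorem mainTheorem10
  (z : nat -> R) (B : R -> R) (a : nat -> R) (c : R)
  (hz : forall n, 0 < z n < 1)
  (hsum : exists l, Un_cv (fun N => sum_f_R0 (fun n => 1 - z n) N) l)
  (hlim : Un_cv z 1)
  (hB : forall x, -1 < x < 1 -> Un_cv (blaschke_partial z x) (B x))
  (ha : forall x, -1 < x < 1 ->
          Un_cv (fun N => sum_f_R0 (fun n => a n * x ^ n) N) (B x))
  (hM : Un_cv (fun n => Mmean a (S n)) c) :
  c = 0.
Proof.
  (* B vanishes at zeros z_m accumulating at 1, while B(x) -> c as x -> 1^- *)
  assert (Hsmall : forall eps, 0 < eps -> Rabs c < eps).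
  { intros eps Heps.
    destruct (cesaro_implies_abel a c hM eps Heps) as [delta [Hdelta Habel]].
    destruct (hlim delta Hdelta) as [m Hm].
    specialize (Hm m (Nat.le_refl m)). unfold R_dist in Hm.
    pose proof (hz m) as Hzm.
    rewrite Rabs_minus_sym, Rabs_pos_eq in Hm by lra.
    pose proof (Habel (z m) (B (z m)) Hzm Hm (ha (z m) ltac:(lra))) as Hc.
    rewrite (blaschke_root z B m (hB (z m) ltac:(lra))) in Hc.
    rewrite Rminus_0_l, Rabs_Ropp in Hc. exact Hc. }
  destruct (Req_dec c 0) as [Hc0 | Hc0]; [exact Hc0|].
  pose proof (Hsmall (Rabs c) (Rabs_pos_lt c Hc0)). lra.
Qed.
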